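(* For every integer $k\ge 3$, there exists a majority neighbor sum distinguishing $4$-edge-coloring $c$ of $K_{2k}$ with the following property: if $v_1,\dots,v_{2k}$ is the ordering of the vertices of $K_{2k}$ with $\sigma_c(v_i)<\sigma_c(v_j)$ for all $i<j$, then $v_k$ is incident to at most $k-2$ edges of color $2$, or $v_{k+1}$ is incident to at most $k-2$ edges of color $3$.
   Context: A $4$-edge-coloring of $G$ is any map $c:E(G)\to\{1,2,3,4\}$ (adjacent edges may share colors). It induces $\sigma_c(v)=\sum_{u\in N(v)}c(vu)$. The coloring is neighbor sum distinguishing if $\sigma_c(u)\ne\sigma_c(v)$ for every edge $uv$ (in a complete graph this means all values $\sigma_c(v)$ are distinct, so the ordering is well defined), and majority if every vertex $v$ is incident to at most $d(v)/2$ edges of each single color. *)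

From mathcomp Require Import all_boot.
Set Implicit Arguments. Unset Strict Implicit. Unset Printing Implicit Defensive.

(* Complete graph K_n on vertex set 'I_n.  An edge coloring is a symmetric
   function c : 'I_n -> 'I_n -> nat; only values c u v with u != v matter
   (they are the colors of the edges uv) and they must lie in {1,2,3,4}. *)

Definition is_4_edge_coloring n (c : 'I_n -> 'I_n -> nat) : Prop :=
  (forall u v : 'I_n, c u v = c v u) /\
  (forall u v : 'I_n, u != v -> 1 <= c u v <= 4).

Definition sigma n (c : 'I_n -> 'I_n -> nat) (v : 'I_n) : nat :=
  \sum_(u : 'I_n | u != v) c v u.

Definition deg_col n (c : 'I_n -> 'I_n -> nat) (v : 'I_n) (a : nat) : nat :=
  #|[set u : 'I_n | (u != v) && (c v u == a)]|.

Definition nsd n (c : 'I_n -> 'I_n -> nat) : Prop :=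
  forall u v : 'I_n, u != v -> sigma c u != sigma c v.

Definition majority n (c : 'I_n -> 'I_n -> nat) : Prop :=
  forall (v : 'I_n) (a : nat), 2 * deg_col c v a <= n.-1.

(* rank of v in the ordering by sigma: number of vertices with smaller sum;
   v_i (1-based) in the paper's ordering is the vertex of rank i-1 *)
Definition srank n (c : 'I_n -> 'I_n -> nat) (v : 'I_n) : nat :=
  #|[set u : 'I_n | sigma c u < sigma c v]|.

From mathcomp Require Import all_boot zify.
Set Implicit Arguments. Unset Strict Implicit. Unset Printing Implicit Defensive.

(* Color the edge uv of K_n, whose vertices are 0, ..., n-1, by f (u + v).  Then
   sigma (w + 1) - sigma w = f (w + n) - f w - f (2w + 2) + f (2w), so a local
   inequality on f makes sigma strictly increasing: the coloring is neighbor sum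
   distinguishing and v_i is the vertex i - 1.  Vertex v sees the colors of the sums
   in the window [v, v + n) other than 2v, so majority amounts to counting colors of f
   on windows.  For k >= 4 the staircase [stair_color] works, and color 3 occurs at
   only three sums, which settles the last property at v_(k+1) once k >= 5; the case
   k = 4 is computed, and k = 3 needs a separate table. *)

Lemma card_le_injection (T : finType) (A : {pred T}) (h : T -> nat) m :
  {in A &, injective h} -> {in A, forall x, h x < m} -> #|A| <= m.
Proof.
move=> h_inj h_lt; rewrite cardE -(size_map h) -[m](size_iota 0).
apply: uniq_leq_size => [|_ /mapP[x + ->]].
  by rewrite map_inj_in_uniq ?enum_uniq // => x y; rewrite !mem_enum; apply: h_inj.
by rewrite mem_enum mem_iota => /h_lt.
Qed.

Lemma card_ord_lt n (v : 'I_n) : #|[set u : 'I_n | u < v]| = v.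
Proof.
rewrite -sum1_card (eq_bigl (fun u : 'I_n => u < v)) => [|u]; last by rewrite inE.
by rewrite (big_ord_narrow (ltnW (ltn_ord v))) sum1_card card_ord.
Qed.

Lemma deg_col_eq0 n (c : 'I_n -> 'I_n -> nat) v a :
  is_4_edge_coloring c -> (a == 0) || (4 < a) -> deg_col c v a = 0.
Proof.
move=> [_ c_range] a_out; apply/eqP; rewrite cards_eq0; apply/eqP/setP => u.
rewrite !inE; apply/negP => /andP[uv /eqP cvu].
by have := c_range v u; rewrite eq_sym uv cvu; lia.
Qed.

Section IncreasingSigma.
Variables (n : nat) (c : 'I_n -> 'I_n -> nat).
Hypothesis sigma_increasing : forall u v : 'I_n, u < v -> sigma c u < sigma c v.

Lemma ltn_sigma u v : (sigma c u < sigma c v) = (u < v).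
Proof.
case: (ltngtP u v) => [/sigma_increasing //|/sigma_increasing lt_vu|/val_inj->].
- by apply/negbTE; rewrite -leqNgt ltnW.
- exact: ltnn.
Qed.

Lemma srank_increasing v : srank c v = v.
Proof.
rewrite /srank -[RHS](card_ord_lt v).
by apply: eq_card => u; rewrite !inE ltn_sigma.
Qed.

Lemma nsd_increasing : nsd c.
Proof. by move=> u v; rewrite -val_eqE !neq_ltn !ltn_sigma. Qed.

End IncreasingSigma.

Section SumColoring.
Variables (n : nat) (f : nat -> nat).

Definition sum_coloring (u v : 'I_n) : nat := f (u + v).

Lemma sum_coloring_4 : (forall s, s < 2 * n - 1 -> 0 < f s <= 4) ->
  is_4_edge_coloring sum_coloring.
Proof.
move=> f_range; split=> [u v|u v _]; first by rewrite /sum_coloring addnC.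
by apply: f_range; have := ltn_ord u; have := ltn_ord v; lia.
Qed.

Lemma deg_col_sum_coloring (v : 'I_n) a :
  deg_col sum_coloring v a = count (fun u => (u != v :> nat) && (f (v + u) == a)) (iota 0 n).
Proof.
rewrite -val_enum_ord count_map /deg_col cardsE cardE /enum_mem size_filter.
by rewrite filter_predT.
Qed.

Definition color_window v a :=
  [pred s | [&& v <= s < v + n, s != v + v & f s == a]].

Lemma deg_col_sum_coloring_le (v : 'I_n) a (h : nat -> nat) m :
  {in color_window v a &, injective h} -> {in color_window v a, forall s, h s < m} ->
  deg_col sum_coloring v a <= m.
Proof.
move=> h_inj h_lt.
have in_window u : u \in [set u | (u != v) && (sum_coloring v u == a)] ->
    v + u \in color_window v a.
  by rewrite !inE -val_eqE /= leq_addr ltn_add2l ltn_ord eqn_add2l.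
rewrite /deg_col; apply: (card_le_injection (h := fun u : 'I_n => h (v + u))).
  move=> u w /in_window u_in /in_window w_in /(h_inj _ _ u_in w_in)/addnI.
  exact: val_inj.
by move=> u /in_window/h_lt.
Qed.

Definition sum_sigma w := \sum_(u < n | u != w :> nat) f (w + u).

Lemma sigma_sum_coloring v : sigma sum_coloring v = sum_sigma v.
Proof. by []. Qed.

Lemma sum_sigmaS w : w.+1 < n ->
  sum_sigma w.+1 + f (w.+1 + w.+1) + f w = sum_sigma w + f (w + w) + f (w + n).
Proof.
move=> lt_w1n; have lt_wn := ltnW lt_w1n.
have add_diag x (lt_xn : x < n) : sum_sigma x + f (x + x) = \sum_(u < n) f (x + u).
  by rewrite (bigD1 (Ordinal lt_xn)) //= addnC.
rewrite (add_diag _ lt_w1n) (add_diag _ lt_wn).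
transitivity (\sum_(u < n.+1) f (w + u)); last by rewrite big_ord_recr.
rewrite big_ord_recl addn0 addnC; congr (_ + _).
by apply: eq_bigr => u _; rewrite /= addnS.
Qed.

Hypothesis f_step : forall w, w.+1 < n -> f w + f (w.+1 + w.+1) < f (w + n) + f (w + w).

Lemma sum_sigma_increasing : {in gtn n &, {homo sum_sigma : a b / a < b}}.
Proof.
apply: homo_ltn_in => [y x z|i j _ lt_jn k /andP[_ lt_kj]|w _ lt_w1n].
- exact: ltn_trans.
- exact: ltn_trans lt_kj lt_jn.
- have := sum_sigmaS lt_w1n; have := f_step lt_w1n; lia.
Qed.

Lemma sigma_sum_coloring_increasing (u v : 'I_n) : u < v ->
  sigma sum_coloring u < sigma sum_coloring v.
Proof.
by move=> lt_uv; rewrite !sigma_sum_coloring; apply: sum_sigma_increasing; rewrite ?inE.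
Qed.

Lemma srank_sum_coloring v : srank sum_coloring v = v.
Proof. exact/srank_increasing/sigma_sum_coloring_increasing. Qed.

Lemma nsd_sum_coloring : nsd sum_coloring.
Proof. exact/nsd_increasing/sigma_sum_coloring_increasing. Qed.

End SumColoring.

Arguments sum_coloring : clear implicits.

(* [(k./2).*2] is the even one of k - 1 and k; with the odd one the step
   inequality fails. *)
Definition stair_color k s :=
  let j := s./2 in let m := (k./2).*2 in
  if odd s then (if j < k.-1 then 1 else if j == k.-1 then 3 else 2)
  else if j.+1 < m then 2 else if j <= m then 3 else 4.

Lemma stair_color_even k j : stair_color k j.*2 =
  if j.+1 < (k./2).*2 then 2 else if j <= (k./2).*2 then 3 else 4.
Proof. by rewrite /stair_color odd_double doubleK. Qed.

Lemma stair_color_odd k j : stair_color k j.*2.+1 =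
  if j < k.-1 then 1 else if j == k.-1 then 3 else 2.
Proof. by rewrite /stair_color /= odd_double uphalf_double. Qed.

Lemma stair_color_range k s : 0 < stair_color k s <= 4.
Proof. by rewrite /stair_color; repeat case: ifP. Qed.

Lemma stair_color_step k : 4 <= k -> forall w, w.+1 < 2 * k ->
  stair_color k w + stair_color k (w.+1 + w.+1) <
  stair_color k (w + 2 * k) + stair_color k (w + w).
Proof.
move=> k_ge4 w; move: (odd_double_half w); set q := w./2.
case: (odd w) => <-; rewrite ?add0n ?add1n => lt_w1n.
- have -> : q.*2.+2 + q.*2.+2 = q.+1.*2.*2 by lia.
  have -> : q.*2.+1 + 2 * k = (q + k).*2.+1 by lia.
  have -> : q.*2.+1 + q.*2.+1 = q.*2.+1.*2 by lia.
  rewrite !stair_color_even !stair_color_odd.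
  repeat case: ifP; lia.
- have -> : q.*2.+1 + q.*2.+1 = q.*2.+1.*2 by lia.
  have -> : q.*2 + 2 * k = (q + k).*2 by lia.
  have -> : q.*2 + q.*2 = q.*2.*2 by lia.
  rewrite !stair_color_even.
  repeat case: ifP; lia.
Qed.

Section StairDegrees.
Variables (k : nat) (v : 'I_(2 * k)).
Hypothesis k_ge4 : 4 <= k.

Let c := sum_coloring (2 * k) (stair_color k).

Ltac stair_window :=
  move=> s t /and3P[? ? /eqP] + /and3P[? ? /eqP]; have := ltn_ord v;
  rewrite /stair_color; repeat case: ifP; lia.

Ltac stair_bound :=
  move=> s /and3P[? ? /eqP]; have := ltn_ord v;
  rewrite /stair_color; repeat case: ifP; lia.

Lemma stair_deg_col1 : deg_col c v 1 <= k - 1.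
Proof. by apply: (deg_col_sum_coloring_le (h := half)); [stair_window | stair_bound]. Qed.

(* Even sums of color 2 are at most 2k - 4 and odd ones at least 2k + 1, so no
   window contains one of each. *)
Lemma stair_deg_col2 : deg_col c v 2 <= k - 1.
Proof.
apply: (deg_col_sum_coloring_le (h := fun s => if odd s then s./2 - k else s./2)).
  by stair_window.
by stair_bound.
Qed.

Lemma stair_deg_col3 : deg_col c v 3 <= 3.
Proof.
apply: (deg_col_sum_coloring_le (h := fun s => if odd s then 0 else (odd s./2).+1)).
  by stair_window.
by stair_bound.
Qed.

Lemma stair_deg_col4 : deg_col c v 4 <= k - 1.
Proof.
by apply: (deg_col_sum_coloring_le (h := fun s => s./2 - k)); [stair_window | stair_bound].
Qed.

End StairDegrees.

Lemma stair_coloring_4 k : is_4_edge_coloring (sum_coloring (2 * k) (stair_color k)).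
Proof. by apply: sum_coloring_4 => s _; apply: stair_color_range. Qed.

Lemma stair_majority k : 4 <= k -> majority (sum_coloring (2 * k) (stair_color k)).
Proof.
move=> k_ge4 v a; have [a_out|] := boolP ((a == 0) || (4 < a)).
  by rewrite deg_col_eq0 //; apply: stair_coloring_4.
case: a => [|[|[|[|[|a]]]]] //= _.
- by have := stair_deg_col1 v k_ge4; lia.
- by have := stair_deg_col2 v k_ge4; lia.
- by have := stair_deg_col3 v k_ge4; lia.
- by have := stair_deg_col4 v k_ge4; lia.
Qed.

Lemma stair_deg_col_k4 (v : 'I_8) : v = 3 :> nat ->
  deg_col (sum_coloring 8 (stair_color 4)) v 2 <= 2.
Proof. by move=> v3; rewrite deg_col_sum_coloring v3. Qed.

(* [stair_color 3] violates the step inequality at w = 2. *)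
Definition k3_color s := nth 0 [:: 1; 1; 1; 3; 2; 2; 3; 4; 3; 4; 1] s.

Lemma k3_coloring_4 : is_4_edge_coloring (sum_coloring 6 k3_color).
Proof. by apply: sum_coloring_4 => s; do 11! case: s => [//|s]. Qed.

Lemma k3_color_step w : w.+1 < 6 ->
  k3_color w + k3_color (w.+1 + w.+1) < k3_color (w + 6) + k3_color (w + w).
Proof. by do 5! case: w => [//|w]. Qed.

Lemma k3_majority : majority (sum_coloring 6 k3_color).
Proof.
move=> v a; have [a_out|] := boolP ((a == 0) || (4 < a)).
  by rewrite deg_col_eq0 //; apply: k3_coloring_4.
rewrite deg_col_sum_coloring.
by case: v => [[|[|[|[|[|[|//]]]]]] ?]; case: a => [|[|[|[|[|a]]]]].
Qed.

Lemma k3_deg_col (v : 'I_6) : v = 2 :> nat -> deg_col (sum_coloring 6 k3_color) v 2 <= 1.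
Proof. by move=> v2; rewrite deg_col_sum_coloring v2. Qed.

Theorem mainTheorem20 (k : nat) (hk : 3 <= k) :
  exists c : 'I_(2 * k) -> 'I_(2 * k) -> nat,
    [/\ is_4_edge_coloring c, nsd c, majority c &
      forall vk vk1 : 'I_(2 * k),
        srank c vk = k.-1 -> srank c vk1 = k ->
        deg_col c vk 2 <= k - 2 \/ deg_col c vk1 3 <= k - 2].
Proof.
have [k3 | k_ge4] : k = 3 \/ 4 <= k by lia.
  subst k; exists (sum_coloring 6 k3_color); split.
  - exact: k3_coloring_4.
  - exact: nsd_sum_coloring k3_color_step.
  - exact: k3_majority.
  - move=> vk vk1; rewrite !(srank_sum_coloring k3_color_step) => /k3_deg_col deg2 _.
    by left.
exists (sum_coloring (2 * k) (stair_color k)); split.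
- exact: stair_coloring_4.
- exact: nsd_sum_coloring (stair_color_step k_ge4).
- exact: stair_majority.
- move=> vk vk1; rewrite !(srank_sum_coloring (stair_color_step k_ge4)) => vk_eq vk1_eq.
  have [k4 | k_ge5] : k = 4 \/ 5 <= k by lia.
    by subst k; left; apply: stair_deg_col_k4.
  by right; have := stair_deg_col3 vk1 k_ge4; lia.
Qed.
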